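(* Let $F$ be a field, let $M\geq 2$ be an integer, and let $\omega\in F$ be a primitive $(M-1)$-th root of unity. Let $k_1,\ldots,k_N$ be natural numbers with $\sum_{i=1}^N k_i=M$. Then in the polynomial ring $F[x_1,\ldots,x_N]$, \[ \sum_{j=1}^{M-1}\prod_{i=1}^N(\omega^j+x_i)^{k_i}=(M-1)\prod_{i=1}^N x_i^{k_i}+(M-1)\sum_{i=1}^N k_ix_i+\mathbf{1}_M(2). \]
   Context: The indicator function is $\mathbf{1}_M(x)=1$ if $x=M$ and $\mathbf{1}_M(x)=0$ if $x\neq M$; so $\mathbf{1}_M(2)$ equals $1$ if $M=2$ and $0$ otherwise. *)

From HB Require Import structures.
From mathcomp Require Import all_boot all_order all_algebra.
From mathcomp Require Import mpoly.
Set Implicit Arguments. Unset Strict Implicit. Unset Printing Implicit Defensive.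

(* Put P(t) := prod_i (t + x_i)^(k_i), a monic polynomial of degree M in t over
   F[x_1, ..., x_N].  Summing P over the (M-1)-th roots of unity kills every
   coefficient of P except those of t^d with M-1 | d, each multiplied by M-1.
   For M >= 3 these are the constant term prod_i x_i^(k_i) and the coefficient
   sum_i k_i x_i of t^(M-1); for M = 2 the leading coefficient 1 survives too. *)

From HB Require Import structures.
From mathcomp Require Import all_boot all_order all_algebra.
From mathcomp Require Import mpoly.
Import GRing.Theory.
Local Open Scope ring_scope.

Section PrimitiveRootSums.

Variables (R : idomainType) (n : nat) (w : R).
Hypothesis w_prim : n.-primitive_root w.

Lemma sum_prim_root_exp (d : nat) :
  \sum_(1 <= j < n.+1) (w ^+ j) ^+ d = if (n %| d)%N then n%:R else 0.
Proof.
under eq_bigr => j _ do rewrite exprAC.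
rewrite (prim_order_dvd w_prim); have [->|z_neq1] := eqVneq (w ^+ d) 1.
  by under eq_bigr => j _ do rewrite expr1n; rewrite sumr_const_nat subn1.
set z := w ^+ d in z_neq1 *.
have zn : z ^+ n = 1 by rewrite -exprM mulnC exprM (prim_expr_order w_prim) expr1n.
have : (z - 1) * \sum_(1 <= j < n.+1) z ^+ j = 0.
  rewrite mulr_sumr; under eq_bigr => j _ do rewrite mulrBl mul1r -exprS.
  by rewrite telescope_sumr // exprS zn mulr1 subrr.
by move/eqP; rewrite mulf_eq0 subr_eq0 (negPf z_neq1) => /eqP.
Qed.

Lemma sum_horner_prim_root (A : nzRingType) (f : {rmorphism R -> A})
    (p : {poly A}) :
  \sum_(1 <= j < n.+1) p.[f (w ^+ j)]
  = n%:R * \sum_(d < size p | (n %| d)%N) p`_d.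
Proof.
under eq_bigr => j _ do rewrite horner_coef.
rewrite exchange_big mulr_sumr [RHS]big_mkcond /=; apply: eq_bigr => d _.
rewrite -mulr_sumr; under eq_bigr => j _ do rewrite -rmorphXn.
rewrite -rmorph_sum sum_prim_root_exp.
by case: ifP; rewrite ?rmorph_nat ?rmorph0 ?mulr_natr ?mulr_natl ?mulr0.
Qed.

End PrimitiveRootSums.

Lemma sum_dvdn_ord_succ2 (V : nmodType) (n : nat) (a : nat -> V) : (0 < n)%N ->
  \sum_(d < n.+2 | (n %| d)%N) a d
  = a 0%N + a n + (if n == 1%N then a n.+1 else 0).
Proof.
case: n => // m _; rewrite big_mkcond 2!big_ord_recr big_ord_recl /= dvdnn.
rewrite big1 ?addr0 => [|i _]; last first.
  rewrite /bump add1n; case: ifP => // /(dvdn_leq (ltn0Sn i)).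
  by rewrite ltnS leqNgt ltn_ord.
by rewrite -[m.+2]addn1 dvdn_addr // dvdn1.
Qed.

Section ProdXaddC.

Variables (R : nzRingType) (I : Type) (a : I -> R).

Lemma monic_prod_XaddC (r : seq I) : \prod_(i <- r) ('X + (a i)%:P) \is monic.
Proof. by apply: monic_prod => i _; apply: monicXaddC. Qed.

Lemma size_prod_XaddC (r : seq I) :
  size (\prod_(i <- r) ('X + (a i)%:P)) = (size r).+1.
Proof.
elim: r => [|i r IHr]; first by rewrite big_nil size_poly1.
rewrite big_cons size_monicM ?monicXaddC ?monic_neq0 ?monic_prod_XaddC //.
by rewrite size_XaddC IHr.
Qed.

Lemma coef0_prod_XaddC (r : seq I) :
  (\prod_(i <- r) ('X + (a i)%:P))`_0 = \prod_(i <- r) a i.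
Proof.
by rewrite coef0_prod; apply: eq_bigr => i _; rewrite coefD coefX coefC add0r.
Qed.

Lemma coef_size_prod_XaddC (r : seq I) :
  (\prod_(i <- r) ('X + (a i)%:P))`_(size r) = 1.
Proof.
by have /monicP := monic_prod_XaddC r; rewrite lead_coefE size_prod_XaddC.
Qed.

Lemma subleading_coef_prod_XaddC (r : seq I) : (0 < size r)%N ->
  (\prod_(i <- r) ('X + (a i)%:P))`_(size r).-1 = \sum_(i <- r) a i.
Proof.
case: r => // i0 r _ /=; elim: r i0 => [|i r IHr] i0.
  by rewrite !big_seq1 coefD coefX coefC add0r.
rewrite big_cons mulrDl coefD coefXM coefCM /= IHr coef_size_prod_XaddC.
by rewrite mulr1 [RHS]big_cons addrC.
Qed.

End ProdXaddC.

Section FlattenNseq.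

Variables (I : Type) (r : seq I) (k : I -> nat).

Lemma size_flatten_nseq :
  size (flatten [seq nseq (k i) i | i <- r]) = (\sum_(i <- r) k i)%N.
Proof.
by rewrite size_flatten sumnE !big_map; apply: eq_bigr => i _; rewrite size_nseq.
Qed.

Lemma sumr_flatten_nseq (V : nmodType) (G : I -> V) :
  \sum_(i <- flatten [seq nseq (k i) i | i <- r]) G i = \sum_(i <- r) G i *+ k i.
Proof.
by rewrite big_flatten big_map; apply: eq_bigr => i _; rewrite big_nseq iter_addr_0.
Qed.

Lemma prodr_flatten_nseq (S : pzSemiRingType) (G : I -> S) :
  \prod_(i <- flatten [seq nseq (k i) i | i <- r]) G i = \prod_(i <- r) G i ^+ k i.
Proof.
by rewrite big_flatten big_map; apply: eq_bigr => i _; rewrite big_nseq iter_mulr_1.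
Qed.

End FlattenNseq.

Theorem lemma2 (F : fieldType) (M N : nat) (hM : (2 <= M)%N) (omega : F)
  (homega : (M.-1).-primitive_root omega) (k : 'I_N -> nat)
  (hk : (\sum_(i < N) k i)%N = M) :
  \sum_(1 <= j < M) \prod_(i < N) ((omega ^+ j)%:MP + 'X_i) ^+ (k i)
  = (M.-1)%:R * \prod_(i < N) ('X_i : {mpoly F[N]}) ^+ (k i)
    + (M.-1)%:R * \sum_(i < N) (k i)%:R * 'X_i
    + (M == 2%N)%:R.
Proof.
case: M hM homega hk => [//|n] /= n_gt0 w_prim hk.
set s := flatten [seq nseq (k i) i | i <- index_enum 'I_N].
have size_s : size s = n.+1 by rewrite size_flatten_nseq hk.
pose P : {poly {mpoly F[N]}} := \prod_(i <- s) ('X + ('X_i)%:P).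
have evalP j :
    \prod_(i < N) ((omega ^+ j)%:MP + 'X_i) ^+ k i = P.[(omega ^+ j)%:MP].
  rewrite horner_prod prodr_flatten_nseq; apply: eq_bigr => i _.
  by rewrite hornerD hornerX hornerC addrC.
under eq_bigr => j _ do rewrite evalP.
rewrite sum_horner_prim_root // size_prod_XaddC size_s sum_dvdn_ord_succ2 //.
have coef0P : P`_0 = \prod_(i < N) 'X_i ^+ k i.
  by rewrite coef0_prod_XaddC prodr_flatten_nseq.
have coefnP : P`_n = \sum_(i < N) (k i)%:R * 'X_i.
  rewrite -[n]/(n.+1.-1) -size_s subleading_coef_prod_XaddC ?size_s //.
  by rewrite sumr_flatten_nseq; apply: eq_bigr => i _; rewrite mulr_natl.
have leadP : P`_n.+1 = 1 by rewrite -size_s coef_size_prod_XaddC.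
rewrite coef0P coefnP leadP !mulrDr eqSS.
by case: eqP => [->|_]; rewrite ?mulr1 ?mulr0.
Qed.
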